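(* Let $\ell_n>0$, $\sigma_{n,0}>0$, $\kappa_n\in\mathbb R$, $\sigma_{n,\pm1}\ge0$ for $n\in\mathbb N$, let $\sigma_n=\max(\sigma_{n,-1},\sigma_{n,1})$, and let $(x_n)_{n\in\mathbb N}$ be a positive solution with given $x_0\in\mathbb R$. Then: (i) for every $n\ge2$, $x_n\le \dfrac{\sqrt{\kappa_n^2+4\ell_n\sigma_{n,0}}-\kappa_n}{2\sigma_{n,0}}\le \sqrt{\ell_n/\sigma_{n,0}}+\kappa_n^-/\sigma_{n,0}$; (ii) if $n\ge2$ satisfies $\sigma_n\le\sigma_{n,0}<2\sigma_n$ and $-2(\sigma_{n,0}-\sigma_n)\sqrt{\ell_n}\le\kappa_n\sqrt{2\sigma_n-\sigma_{n,0}}$, then $x_n\le\sqrt{\ell_n}/\sqrt{2\sigma_n-\sigma_{n,0}}$; the same bound holds for $n=1$ if $\sigma_1\le\sigma_{1,0}<2\sigma_1$ and $-2(\sigma_{1,0}-\sigma_1)\sqrt{\ell_1}\le(\sigma_{1,-1}x_0+\kappa_1)\sqrt{2\sigma_1-\sigma_{1,0}}$.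
   Context: $\mathbb N=\{1,2,3,\dots\}$; $a^-=(|a|-a)/2$. A positive solution with given $x_0\in\mathbb R$ is a sequence $(x_n)_{n\in\mathbb N}$ of positive reals satisfying $\ell_n = x_n(\sigma_{n,1}x_{n+1}+\sigma_{n,0}x_n+\sigma_{n,-1}x_{n-1})+\kappa_n x_n$ for all $n\in\mathbb N$. *)

From Stdlib Require Import Reals Lra Lia.
Open Scope R_scope.

Definition negpart (a : R) : R := (Rabs a - a) / 2.

(* Indices n range over N = {1,2,...}; coefficient sequences are nat -> R
   whose value at 0 is irrelevant.  x 0 is the given x_0 (any real). *)
Definition positive_solution (ell sigp sig0 sigm kappa x : nat -> R) : Prop :=
  forall n : nat, (1 <= n)%nat ->
    0 < x n /\
    ell n = x n * (sigp n * x (S n) + sig0 n * x n + sigm n * x (n - 1)%nat)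
            + kappa n * x n.

From Stdlib Require Import Reals Lra Lia.
Open Scope R_scope.

(* Every term on the right of the recurrence is nonnegative
   except kappa_n x_n, so dropping the neighbour terms sigma_{n,+-1} x_{n+-1}
   turns the equation at n into the quadratic inequality
       s x^2 + k x <= l        (s = sigma_{n,0}, l = ell_n, x = x_n > 0),
   with k = kappa_n when n >= 2 (both neighbours are positive) and
   k = sigma_{1,-1} x_0 + kappa_1 when n = 1 (only x_2 is known positive).
   Part (i) says that x lies below the positive root of s X^2 + k X - l,
   which is in turn at most sqrt(l/s) + k^-/s.  Part (ii) is a second bound
   from the same inequality: writing s = a + (s - a) with a = 2 sigma_n - s,
   either (s - a) x + k >= 0, so a x^2 <= l, or the hypothesis relating k
   and sqrt l forces x sqrt a < sqrt l directly. *)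

Lemma le_sqrt_of_sq_le (x c : R) : 0 <= x -> x ^ 2 <= c -> x <= sqrt c.
Proof.
  intros Hx Hxc. rewrite <- (sqrt_pow2 x Hx). now apply sqrt_le_1_alt.
Qed.

Lemma sqrt_le_of_le_sq (c y : R) : 0 <= y -> c <= y ^ 2 -> sqrt c <= y.
Proof.
  intros Hy Hcy. rewrite <- (sqrt_pow2 y Hy). now apply sqrt_le_1_alt.
Qed.

Lemma le_positive_root (s l k x : R) : 0 < s -> s * x ^ 2 + k * x <= l ->
  x <= (sqrt (k ^ 2 + 4 * l * s) - k) / (2 * s).
Proof.
  intros Hs Hquad.
  assert (Hlin : 2 * s * x + k <= sqrt (k ^ 2 + 4 * l * s)).
  { destruct (Rle_or_lt (2 * s * x + k) 0) as [Hneg | Hpos].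
    - pose proof (sqrt_pos (k ^ 2 + 4 * l * s)). lra.
    - apply le_sqrt_of_sq_le; [lra |].
      (* (2 s x + k)^2 = k^2 + 4 s (s x^2 + k x) *)
      replace ((2 * s * x + k) ^ 2) with (k ^ 2 + 4 * s * (s * x ^ 2 + k * x))
        by ring.
      nra. }
  apply Rmult_le_reg_r with (2 * s); [lra |].
  replace ((sqrt (k ^ 2 + 4 * l * s) - k) / (2 * s) * (2 * s))
    with (sqrt (k ^ 2 + 4 * l * s) - k) by (field; lra).
  lra.
Qed.

(* Either
   (s - a) x + k >= 0 and so a x^2 <= l, or the hypothesis on k gives
   x sqrt a < sqrt l. *)
Lemma le_sqrt_ratio (s a l k x : R) : 0 < x -> 0 < a -> a <= s ->
  s * x ^ 2 + k * x <= l -> - (s - a) * sqrt l <= k * sqrt a ->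
  x <= sqrt l / sqrt a.
Proof.
  intros Hx Ha Has Hquad Hk.
  pose proof (sqrt_lt_R0 a Ha) as Hra.
  destruct (Rle_or_lt 0 ((s - a) * x + k)) as [Hnn | Hneg].
  - assert (Hax : a * x ^ 2 <= l) by nra.
    rewrite <- sqrt_div_alt by lra.
    apply le_sqrt_of_sq_le; [lra |].
    apply Rmult_le_reg_r with a; [lra |].
    replace (l / a * a) with l by (field; lra). lra.
  - assert (Hlt : x * sqrt a < sqrt l) by nra.
    apply Rmult_le_reg_r with (sqrt a); [lra |].
    replace (sqrt l / sqrt a * sqrt a) with (sqrt l) by (field; lra). lra.
Qed.

(* Part (i), second inequality: an explicit bound on the positive root,
   from sqrt (k^2 + 4 l s) <= |k| + 2 s sqrt (l/s). *)
Lemma positive_root_le (s l k : R) : 0 < s -> 0 < l ->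
  (sqrt (k ^ 2 + 4 * l * s) - k) / (2 * s) <= sqrt (l / s) + negpart k / s.
Proof.
  intros Hs Hl.
  assert (Hls : 0 <= l / s) by (apply Rlt_le, Rdiv_lt_0_compat; lra).
  pose proof (sqrt_pos (l / s)) as Ht.
  assert (Et : sqrt (l / s) ^ 2 * s = l).
  { rewrite <- Rsqr_pow2, Rsqr_sqrt by exact Hls. field. lra. }
  pose proof (Rabs_pos k) as Hk. pose proof (pow2_abs k) as Ek.
  assert (HD : sqrt (k ^ 2 + 4 * l * s) <= Rabs k + 2 * s * sqrt (l / s)).
  { apply sqrt_le_of_le_sq; [nra |].
    assert (0 <= Rabs k * s * sqrt (l / s)) by (apply Rmult_le_pos; nra).
    nra. }
  unfold negpart. apply Rmult_le_reg_r with (2 * s); [lra |].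
  replace ((sqrt (k ^ 2 + 4 * l * s) - k) / (2 * s) * (2 * s))
    with (sqrt (k ^ 2 + 4 * l * s) - k) by (field; lra).
  replace ((sqrt (l / s) + (Rabs k - k) / 2 / s) * (2 * s))
    with (2 * s * sqrt (l / s) + Rabs k - k) by (field; lra).
  lra.
Qed.

Lemma recurrence_drop_next (l p s m k x y z : R) :
  0 < x -> 0 <= p -> 0 < y -> l = x * (p * y + s * x + m * z) + k * x ->
  s * x ^ 2 + (m * z + k) * x <= l.
Proof.
  intros Hx Hp Hy El.
  assert (0 <= p * y) by (apply Rmult_le_pos; lra).
  rewrite El. nra.
Qed.

Lemma recurrence_drop_both (l p s m k x y z : R) :
  0 < x -> 0 <= p -> 0 < y -> 0 <= m -> 0 < z ->
  l = x * (p * y + s * x + m * z) + k * x ->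
  s * x ^ 2 + k * x <= l.
Proof.
  intros Hx Hp Hy Hm Hz El.
  pose proof (recurrence_drop_next l p s m k x y z Hx Hp Hy El).
  assert (0 <= m * z) by (apply Rmult_le_pos; lra).
  nra.
Qed.

Theorem mainTheorem6
  (ell sigp sig0 sigm kappa x : nat -> R)
  (Hell : forall n : nat, (1 <= n)%nat -> 0 < ell n)
  (Hsig0 : forall n : nat, (1 <= n)%nat -> 0 < sig0 n)
  (Hsigp : forall n : nat, (1 <= n)%nat -> 0 <= sigp n)
  (Hsigm : forall n : nat, (1 <= n)%nat -> 0 <= sigm n)
  (Hsol : positive_solution ell sigp sig0 sigm kappa x) :
  let sigma := fun n : nat => Rmax (sigm n) (sigp n) in
  (* (i) *)
  (forall n : nat, (2 <= n)%nat ->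
     x n <= (sqrt (kappa n ^ 2 + 4 * ell n * sig0 n) - kappa n) / (2 * sig0 n) /\
     (sqrt (kappa n ^ 2 + 4 * ell n * sig0 n) - kappa n) / (2 * sig0 n)
       <= sqrt (ell n / sig0 n) + negpart (kappa n) / sig0 n) /\
  (* (ii), n >= 2 *)
  (forall n : nat, (2 <= n)%nat ->
     sigma n <= sig0 n -> sig0 n < 2 * sigma n ->
     - 2 * (sig0 n - sigma n) * sqrt (ell n)
       <= kappa n * sqrt (2 * sigma n - sig0 n) ->
     x n <= sqrt (ell n) / sqrt (2 * sigma n - sig0 n)) /\
  (* (ii), n = 1 *)
  (sigma 1%nat <= sig0 1%nat -> sig0 1%nat < 2 * sigma 1%nat ->
     - 2 * (sig0 1%nat - sigma 1%nat) * sqrt (ell 1%nat)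
       <= (sigm 1%nat * x 0%nat + kappa 1%nat) * sqrt (2 * sigma 1%nat - sig0 1%nat) ->
     x 1%nat <= sqrt (ell 1%nat) / sqrt (2 * sigma 1%nat - sig0 1%nat)).
Proof.
  intros sigma.
  assert (Hpos : forall n, (1 <= n)%nat -> 0 < x n) by (intros n Hn; apply Hsol, Hn).
  assert (Hquad : forall n, (2 <= n)%nat ->
            sig0 n * x n ^ 2 + kappa n * x n <= ell n).
  { intros n Hn.
    destruct (Hsol n ltac:(lia)) as [_ Eq].
    apply (recurrence_drop_both _ (sigp n) _ (sigm n) _ _ (x (S n)) (x (n - 1)%nat));
      [apply Hpos | apply Hsigp | apply Hpos | apply Hsigm | apply Hpos | exact Eq];
      lia. }
  (* With a = 2 sigma - sig0, the hypothesis of (ii) reads -(sig0 - a) sqrt l <= ... *)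
  assert (Hsplit : forall n, - 2 * (sig0 n - sigma n)
                             = - (sig0 n - (2 * sigma n - sig0 n))) by (intros; ring).
  split; [| split].
  - intros n Hn. split.
    + apply le_positive_root; [apply Hsig0 | apply Hquad]; lia.
    + apply positive_root_le; [apply Hsig0 | apply Hell]; lia.
  - intros n Hn H1 H2 H3. rewrite Hsplit in H3.
    apply (le_sqrt_ratio (sig0 n) _ _ (kappa n)); try lra; [apply Hpos | apply Hquad]; lia.
  - intros H1 H2 H3. rewrite Hsplit in H3.
    destruct (Hsol 1%nat ltac:(lia)) as [_ Eq].
    apply (le_sqrt_ratio (sig0 1%nat) _ _ (sigm 1%nat * x 0%nat + kappa 1%nat));
      try lra; [apply Hpos; lia |].
    apply (recurrence_drop_next _ (sigp 1%nat) _ _ _ _ (x 2%nat));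
      [apply Hpos | apply Hsigp | apply Hpos | exact Eq]; lia.
Qed.
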